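(* Consider momentum gradient flow with parameter $\lambda>0$ on a 2-layer diagonal linear network as described in the context. Assume $u_t,v_t\in L^\infty(0,\infty)$ and that $\Delta_\infty=\lim_{t\to\infty}\Delta_t$ has all coordinates nonzero. Then the limit $\lim_{t\to\infty}\int_0^t\nabla L(\theta_s)\,\mathrm{d}s=\int_0^\infty\nabla L(\theta_t)\,\mathrm{d}t$ exists, and consequently $\lim_{t\to\infty}\int_0^t\nabla L(\theta_s)e^{-\frac{t-s}{\lambda}}\,\mathrm{d}s=0$.
   Context: Data $x_1,\dots,x_n\in\mathbb{R}^d$, $y\in\mathbb{R}^n$, loss $L(\theta)=\frac{1}{2n}\sum_{i=1}^n(y_i-\langle x_i,\theta\rangle)^2$. Momentum gradient flow on the diagonal linear network: $(u_t,v_t)$ solves $\lambda\ddot u_t+\dot u_t+\nabla L(\theta_t)\odot v_t=0$, $\lambda\ddot v_t+\dot v_t+\nabla L(\theta_t)\odot u_t=0$, $\theta_t=u_t\odot v_t$, with $\dot u_0=\dot v_0=0$ and $|u_0^2-v_0^2|$ having all coordinates nonzero. $\Delta_t=|u_t^2-v_t^2|$ coordinate-wise. *)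

From Stdlib Require Import Reals.
From Coquelicot Require Import Coquelicot.
Open Scope R_scope.

Fixpoint rsum (N : nat) (f : nat -> R) : R :=
  match N with
  | O => 0
  | S k => rsum k f + f k
  end.

(* Data: X i k = k-th coordinate of x_i (i < n, k < d), y i = y_i.
   Vectors of R^d are functions nat -> R, only coordinates k < d matter. *)
Definition inner (d : nat) (a b : nat -> R) : R := rsum d (fun k => a k * b k).

Definition Loss (n d : nat) (X : nat -> nat -> R) (y : nat -> R) (theta : nat -> R) : R :=
  / (2 * INR n) * rsum n (fun i => (y i - inner d (X i) theta) ^ 2).

Definition gradL (n d : nat) (X : nat -> nat -> R) (y : nat -> R) (theta : nat -> R) (j : nat) : R :=
  - / INR n * rsum n (fun i => (y i - inner d (X i) theta) * X i j).

(* theta_t = u_t (.) v_t, as coordinate functions; u j t = j-th coordinate of u at time t *)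
Definition theta_of (u v : nat -> R -> R) (t : R) : nat -> R := fun j => u j t * v j t.

(* The gradient decays exponentially along the flow, at a rate that may be taken below [1/lam];
   both limits follow by integrating this bound.

   For least squares, [L th - Lmin <= C |grad L th|^2] (Polyak-Lojasiewicz; the data matrix has a
   bounded inverse on its range, built column by column) and [eta |grad L th|^2 <= L th - Lmin]
   (one gradient step).  Along the flow put [P = |u'|^2 + |v'|^2], [Z = d/dt L(th_t)] and
   [N = sum_k (grad L)_k^2 (u_k^2 + v_k^2)].  The energy [lam/2 P + L - Lmin] is nonincreasing,
   which bounds the gradient, and [N] is comparable to [|grad L|^2] once [Delta_t] stays away from
   [0], since [Delta <= u^2 + v^2 <= 2 M^2].  Hence [V = lam/2 P + (L - Lmin) + eps Z] is
   comparable to [P + N] and, for small [eps], satisfies [V' <= - kap V], so [N] and with it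
   [grad L] decay exponentially. *)

From Stdlib Require Import Reals Lra Lia Psatz FunctionalExtensionality.
From Coquelicot Require Import Coquelicot.
Open Scope R_scope.

Definition sqnorm (N : nat) (f : nat -> R) : R := rsum N (fun k => f k ^ 2).

Lemma rsum_ext N f g : (forall k, (k < N)%nat -> f k = g k) -> rsum N f = rsum N g.
Proof.
  induction N as [|N IH]; intros H; simpl; [reflexivity|].
  rewrite IH by (intros; apply H; lia). rewrite H by lia. reflexivity.
Qed.

Lemma rsum_plus N f g : rsum N (fun k => f k + g k) = rsum N f + rsum N g.
Proof. induction N as [|N IH]; simpl; [lra | rewrite IH; ring]. Qed.

Lemma rsum_minus N f g : rsum N (fun k => f k - g k) = rsum N f - rsum N g.
Proof. induction N as [|N IH]; simpl; [lra | rewrite IH; ring]. Qed.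

Lemma rsum_scal N c f : rsum N (fun k => c * f k) = c * rsum N f.
Proof. induction N as [|N IH]; simpl; [lra | rewrite IH; ring]. Qed.

Lemma rsum_scalr N c f : rsum N (fun k => f k * c) = rsum N f * c.
Proof. induction N as [|N IH]; simpl; [lra | rewrite IH; ring]. Qed.

Lemma rsum_opp N f : rsum N (fun k => - f k) = - rsum N f.
Proof. induction N as [|N IH]; simpl; [lra | rewrite IH; ring]. Qed.

Lemma rsum_const0 N : rsum N (fun _ => 0) = 0.
Proof. induction N as [|N IH]; simpl; [lra | rewrite IH; ring]. Qed.

Lemma rsum_exchange N M (f : nat -> nat -> R) :
  rsum N (fun i => rsum M (fun k => f i k)) = rsum M (fun k => rsum N (fun i => f i k)).
Proof.
  induction N as [|N IH]; simpl; [now rewrite rsum_const0|].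
  now rewrite IH, <- rsum_plus.
Qed.

Lemma rsum_le N f g : (forall k, (k < N)%nat -> f k <= g k) -> rsum N f <= rsum N g.
Proof.
  induction N as [|N IH]; intros H; simpl; [lra|].
  assert (rsum N f <= rsum N g) by (apply IH; intros; apply H; lia).
  assert (f N <= g N) by (apply H; lia).
  lra.
Qed.

Lemma rsum_nonneg N f : (forall k, (k < N)%nat -> 0 <= f k) -> 0 <= rsum N f.
Proof. intros H. rewrite <- (rsum_const0 N). now apply rsum_le. Qed.

Lemma rsum_term_le N f k :
  (forall i, (i < N)%nat -> 0 <= f i) -> (k < N)%nat -> f k <= rsum N f.
Proof.
  induction N as [|N IH]; intros H Hk; simpl; [lia|].
  assert (0 <= f N) by (apply H; lia).
  destruct (Nat.eq_dec k N) as [->|Hne].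
  - assert (0 <= rsum N f) by (apply rsum_nonneg; intros; apply H; lia). lra.
  - assert (f k <= rsum N f) by (apply IH; [intros; apply H|]; lia). lra.
Qed.

Lemma Rabs_rsum_le N f : Rabs (rsum N f) <= rsum N (fun k => Rabs (f k)).
Proof.
  induction N as [|N IH]; simpl; [rewrite Rabs_R0; lra|].
  pose proof (Rabs_triang (rsum N f) (f N)). lra.
Qed.

Lemma is_derive_rsum N (f df : nat -> R -> R) t :
  (forall k, (k < N)%nat -> is_derive (f k) t (df k t)) ->
  is_derive (fun s => rsum N (fun k => f k s)) t (rsum N (fun k => df k t)).
Proof.
  induction N as [|N IH]; intros H; simpl; [apply is_derive_Reals, derivable_pt_lim_const|].
  apply (is_derive_plus (fun s => rsum N (fun k => f k s)) (f N)).
  - apply IH. intros; apply H; lia.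
  - apply H; lia.
Qed.

Lemma sqnorm_nonneg N f : 0 <= sqnorm N f.
Proof. apply rsum_nonneg. intros; apply pow2_ge_0. Qed.

Lemma sqnorm_term_le N f k : (k < N)%nat -> f k ^ 2 <= sqnorm N f.
Proof. apply (rsum_term_le N (fun k => f k ^ 2)). intros; apply pow2_ge_0. Qed.

Lemma sqnorm_eq0 N f : sqnorm N f = 0 -> forall k, (k < N)%nat -> f k = 0.
Proof. intros H k Hk. pose proof (sqnorm_term_le N f k Hk). nra. Qed.

Lemma sqnorm_lincomb_le N f g c :
  sqnorm N (fun k => f k + c * g k) <= 2 * sqnorm N f + 2 * c ^ 2 * sqnorm N g.
Proof.
  unfold sqnorm. rewrite <- rsum_scal, <- rsum_scal, <- rsum_plus.
  apply rsum_le. intros k _. pose proof (pow2_ge_0 (f k - c * g k)). nra.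
Qed.

Lemma Cauchy_Schwarz_rsum N a b :
  rsum N (fun k => a k * b k) ^ 2 <= sqnorm N a * sqnorm N b.
Proof.
  unfold sqnorm. induction N as [|N IH]; cbn [rsum]; [simpl; lra|].
  set (S := rsum N (fun k => a k * b k)) in *.
  set (A := rsum N (fun k => a k ^ 2)) in *.
  set (B := rsum N (fun k => b k ^ 2)) in *.
  assert (HA : 0 <= A) by (apply rsum_nonneg; intros; apply pow2_ge_0).
  assert (HB : 0 <= B) by (apply rsum_nonneg; intros; apply pow2_ge_0).
  assert (Hcross : 2 * S * (a N * b N) <= a N ^ 2 * B + b N ^ 2 * A).
  { destruct (Req_dec B 0) as [B0|Bnz].
    - assert (S = 0) by (rewrite B0 in IH; nra). subst S. nra.
    - assert (0 <= B * (a N ^ 2 * B + b N ^ 2 * A - 2 * S * (a N * b N))).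
      { replace (B * _) with ((a N * B - b N * S) ^ 2 + b N ^ 2 * (A * B - S ^ 2)) by ring.
        pose proof (pow2_ge_0 (a N * B - b N * S)). pose proof (pow2_ge_0 (b N)). nra. }
      nra. }
  nra.
Qed.

Definition matvec (X : nat -> nat -> R) (m : nat) (z : nat -> R) (i : nat) : R :=
  rsum m (fun k => X i k * z k).

Definition set_coord (f : nat -> R) (m : nat) (a : R) (k : nat) : R :=
  if Nat.eq_dec k m then a else f k.

Definition least_squares_solvable (n m : nat) (X : nat -> nat -> R) : Prop :=
  forall b : nat -> R, exists w : nat -> R, forall k, (k < m)%nat ->
    rsum n (fun i => X i k * (matvec X m w i - b i)) = 0.

Definition preimage_bounded (n m : nat) (X : nat -> nat -> R) : Prop :=
  exists K, 0 < K /\ forall z : nat -> R, exists z' : nat -> R,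
    (forall i, (i < n)%nat -> matvec X m z' i = matvec X m z i) /\
    sqnorm m z' <= K * sqnorm n (matvec X m z).

Lemma rsum_set_coord m f a (F : nat -> R -> R) :
  rsum m (fun k => F k (set_coord f m a k)) = rsum m (fun k => F k (f k)).
Proof.
  apply rsum_ext. intros k Hk. unfold set_coord.
  destruct (Nat.eq_dec k m); [lia | reflexivity].
Qed.

Lemma set_coord_eq f m a : set_coord f m a m = a.
Proof. unfold set_coord. now destruct (Nat.eq_dec m m). Qed.

Lemma matvec_set_coord X m f a i :
  matvec X (S m) (set_coord f m a) i = matvec X m f i + X i m * a.
Proof.
  unfold matvec. cbn [rsum].
  now rewrite (rsum_set_coord m f a (fun k x => X i k * x)), set_coord_eq.
Qed.

Lemma sqnorm_set_coord m f a : sqnorm (S m) (set_coord f m a) = sqnorm m f + a ^ 2.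
Proof.
  unfold sqnorm. cbn [rsum].
  now rewrite (rsum_set_coord m f a (fun _ x => x ^ 2)), set_coord_eq.
Qed.

Lemma matvec_lincomb X m f g c i :
  matvec X m (fun k => f k + c * g k) i = matvec X m f i + c * matvec X m g i.
Proof.
  unfold matvec. rewrite <- rsum_scal, <- rsum_plus. apply rsum_ext. intros; ring.
Qed.

Lemma rsum_matvec_orth X n m q e :
  (forall k, (k < m)%nat -> rsum n (fun i => X i k * e i) = 0) ->
  rsum n (fun i => matvec X m q i * e i) = 0.
Proof.
  intros He. unfold matvec.
  rewrite (rsum_ext n _ (fun i => rsum m (fun k => q k * (X i k * e i))))
    by (intros; rewrite <- rsum_scalr; apply rsum_ext; intros; ring).
  rewrite rsum_exchange, <- (rsum_const0 m).
  apply rsum_ext. intros k Hk. now rewrite rsum_scal, He, Rmult_0_r.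
Qed.

Section ColumnStep.

Variables (n m : nat) (X : nat -> nat -> R) (w0 : nat -> R).

(* [X w0] is the projection of column [m] onto the span of the first [m] columns, so [rho]
   below is the part of column [m] orthogonal to them. *)
Hypothesis w0_normal :
  forall k, (k < m)%nat -> rsum n (fun i => X i k * (matvec X m w0 i - X i m)) = 0.

Let rho i := X i m - matvec X m w0 i.

Let rho_orth k : (k < m)%nat -> rsum n (fun i => X i k * rho i) = 0.
Proof.
  intros Hk.
  rewrite (rsum_ext n _ (fun i => - (X i k * (matvec X m w0 i - X i m))))
    by (intros; unfold rho; ring).
  now rewrite rsum_opp, w0_normal, Ropp_0.
Qed.

Let matvec_S_decomp z i :
  matvec X (S m) z i = matvec X m (fun k => z k + z m * w0 k) i + z m * rho i.
Proof. rewrite matvec_lincomb. unfold rho, matvec. cbn [rsum]. ring. Qed.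

Let sqnorm_matvec_S z :
  sqnorm n (matvec X (S m) z) =
  sqnorm n (matvec X m (fun k => z k + z m * w0 k)) + z m ^ 2 * sqnorm n rho.
Proof.
  set (z' := fun k => z k + z m * w0 k).
  unfold sqnorm.
  rewrite (rsum_ext n _ (fun i => matvec X m z' i ^ 2
             + (2 * z m * (matvec X m z' i * rho i) + z m ^ 2 * rho i ^ 2)))
    by (intros; rewrite matvec_S_decomp; fold z'; ring).
  rewrite !rsum_plus, !rsum_scal, (rsum_matvec_orth X n m z' rho rho_orth). ring.
Qed.

Lemma least_squares_solvable_S :
  least_squares_solvable n m X -> least_squares_solvable n (S m) X.
Proof.
  intros Hsolv b. destruct (Hsolv b) as [w1 Hw1].
  set (r i := b i - matvec X m w1 i).
  assert (r_orth : forall k, (k < m)%nat -> rsum n (fun i => X i k * r i) = 0).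
  { intros k Hk.
    rewrite (rsum_ext n _ (fun i => - (X i k * (matvec X m w1 i - b i))))
      by (intros; unfold r; ring).
    now rewrite rsum_opp, Hw1, Ropp_0. }
  (* If [sqnorm n rho = 0], [al] is a junk value, but then [rho = 0] and any [al] works. *)
  set (al := rsum n (fun i => r i * rho i) / sqnorm n rho).
  set (e i := al * rho i - r i).
  assert (e_orth : forall k, (k < m)%nat -> rsum n (fun i => X i k * e i) = 0).
  { intros k Hk.
    rewrite (rsum_ext n _ (fun i => al * (X i k * rho i) - X i k * r i))
      by (intros; unfold e; ring).
    rewrite rsum_minus, rsum_scal, rho_orth, r_orth by exact Hk. ring. }
  exists (set_coord (fun k => w1 k + (- al) * w0 k) m al). intros k Hk.
  rewrite (rsum_ext n _ (fun i => X i k * e i))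
    by (intros; rewrite matvec_set_coord, matvec_lincomb; unfold e, r, rho; ring).
  destruct (Nat.eq_dec k m) as [->|Hne]; [|apply e_orth; lia].
  rewrite (rsum_ext n _ (fun i => matvec X m w0 i * e i + rho i * e i))
    by (intros; unfold rho; ring).
  rewrite rsum_plus, (rsum_matvec_orth X n m w0 e e_orth), Rplus_0_l.
  destruct (Req_dec (sqnorm n rho) 0) as [R0|R0].
  - rewrite <- (rsum_const0 n). apply rsum_ext. intros i Hi.
    now rewrite (sqnorm_eq0 n rho R0 i Hi), Rmult_0_l.
  - unfold e. rewrite (rsum_ext n _ (fun i => al * rho i ^ 2 - r i * rho i)) by (intros; ring).
    rewrite rsum_minus, rsum_scal. fold (sqnorm n rho). unfold al. field. exact R0.
Qed.

Lemma preimage_bounded_S : preimage_bounded n m X -> preimage_bounded n (S m) X.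
Proof.
  intros [K [HK Hpre]].
  set (R0 := sqnorm n rho). set (W0 := sqnorm m w0).
  assert (HR0 : 0 <= R0) by apply sqnorm_nonneg.
  assert (HW0 : 0 <= W0) by apply sqnorm_nonneg.
  destruct (Req_dec R0 0) as [R0_0|R0_nz].
  - exists K. split; [exact HK|]. intros z.
    destruct (Hpre (fun k => z k + z m * w0 k)) as [d0 [Hd0 Hnorm]].
    exists (set_coord d0 m 0). split.
    + intros i Hi. rewrite matvec_set_coord, matvec_S_decomp, Hd0 by exact Hi.
      rewrite (sqnorm_eq0 n rho R0_0 i Hi). ring.
    + rewrite sqnorm_set_coord, sqnorm_matvec_S. fold R0. rewrite R0_0. simpl. lra.
  - exists (2 * K + (2 * W0 + 1) / R0). split.
    { assert (0 < (2 * W0 + 1) / R0) by (apply Rdiv_lt_0_compat; lra). lra. }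
    intros z. set (z' := fun k => z k + z m * w0 k).
    destruct (Hpre z') as [d0 [Hd0 Hnorm]].
    exists (set_coord (fun k => d0 k + (- z m) * w0 k) m (z m)). split.
    + intros i Hi. rewrite matvec_set_coord, matvec_lincomb, Hd0, matvec_S_decomp by exact Hi.
      fold z'. unfold rho. ring.
    + rewrite sqnorm_set_coord, sqnorm_matvec_S. fold z' R0.
      pose proof (sqnorm_lincomb_le m d0 w0 (- z m)) as Hlin. fold W0 in Hlin.
      set (S' := sqnorm n (matvec X m z')) in *.
      assert (0 <= S') by apply sqnorm_nonneg.
      assert (0 <= (2 * W0 + 1) / R0 * S')
        by (apply Rmult_le_pos; [apply Rlt_le, Rdiv_lt_0_compat|]; lra).
      assert (0 <= 2 * K * (z m ^ 2 * R0))
        by (pose proof (pow2_ge_0 (z m)); apply Rmult_le_pos; nra).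
      replace ((2 * K + (2 * W0 + 1) / R0) * (S' + z m ^ 2 * R0))
        with (2 * K * S' + 2 * K * (z m ^ 2 * R0) + (2 * W0 + 1) / R0 * S' + (2 * W0 + 1) * z m ^ 2)
        by (field; exact R0_nz).
      replace ((- z m) ^ 2) with (z m ^ 2) in Hlin by ring.
      nra.
Qed.

End ColumnStep.

Lemma least_squares_solvable_all n m X : least_squares_solvable n m X.
Proof.
  induction m as [|m IH].
  - intros b. exists (fun _ => 0). intros; lia.
  - destruct (IH (fun i => X i m)) as [w0 Hw0].
    exact (least_squares_solvable_S n m X w0 Hw0 IH).
Qed.

Lemma preimage_bounded_all n m X : preimage_bounded n m X.
Proof.
  induction m as [|m IH].
  - exists 1. split; [lra|]. intros z. exists z. split; [reflexivity|].
    unfold sqnorm at 1. simpl. rewrite Rmult_1_l. apply sqnorm_nonneg.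
  - destruct (least_squares_solvable_all n m X (fun i => X i m)) as [w0 Hw0].
    exact (preimage_bounded_S n m X w0 Hw0 IH).
Qed.

Lemma rsum_mul_gradL n d X y th h :
  rsum d (fun k => h k * gradL n d X y th k) =
  - / INR n * rsum n (fun i => (y i - inner d (X i) th) * inner d (X i) h).
Proof.
  unfold gradL.
  rewrite (rsum_ext d _ (fun k => - / INR n *
             rsum n (fun i => (y i - inner d (X i) th) * (X i k * h k)))).
  - rewrite rsum_scal, rsum_exchange. f_equal. apply rsum_ext. intros i _.
    unfold inner. rewrite <- rsum_scal. apply rsum_ext. intros; ring.
  - intros k _.
    transitivity (- / INR n * (rsum n (fun i => (y i - inner d (X i) th) * X i k) * h k)); [ring|].
    rewrite <- rsum_scalr. f_equal. apply rsum_ext. intros; ring.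
Qed.

Lemma Loss_add n d X y th h : (0 < n)%nat ->
  Loss n d X y (fun k => th k + h k) =
  Loss n d X y th + rsum d (fun k => h k * gradL n d X y th k)
  + / (2 * INR n) * sqnorm n (fun i => inner d (X i) h).
Proof.
  intros Hn. assert (Hn0 : INR n <> 0) by (apply not_0_INR; lia).
  rewrite rsum_mul_gradL. unfold Loss, sqnorm.
  rewrite (rsum_ext n _ (fun i => (y i - inner d (X i) th) ^ 2
       + (-2 * ((y i - inner d (X i) th) * inner d (X i) h) + inner d (X i) h ^ 2))).
  - rewrite !rsum_plus, rsum_scal. field. exact Hn0.
  - intros i _. unfold inner.
    rewrite (rsum_ext d _ (fun k => X i k * th k + X i k * h k)) by (intros; ring).
    rewrite rsum_plus. ring.
Qed.

Lemma Young_neg_mul a b c : 0 < c -> - (a * b) <= a ^ 2 / (2 * c) + c / 2 * b ^ 2.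
Proof.
  intros Hc.
  assert (E : a ^ 2 / (2 * c) + c / 2 * b ^ 2 + a * b = (a + c * b) ^ 2 / (2 * c))
    by (field; lra).
  assert (0 <= (a + c * b) ^ 2 / (2 * c))
    by (apply Rmult_le_pos; [apply pow2_ge_0 | apply Rlt_le, Rinv_0_lt_compat; lra]).
  lra.
Qed.

Lemma Loss_PL n d X y : (0 < n)%nat ->
  exists C, 0 < C /\ forall th ph,
    Loss n d X y th - Loss n d X y ph <= C * sqnorm d (gradL n d X y th).
Proof.
  intros Hn. assert (Hn' : 0 < INR n) by (apply lt_0_INR; lia).
  destruct (preimage_bounded_all n d X) as [K [HK Hpre]].
  set (c := INR n * K). assert (Hc : 0 < c) by (apply Rmult_lt_0_compat; lra).
  exists (c / 2). split; [lra|]. intros th ph.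
  set (h := fun k => ph k - th k).
  replace ph with (fun k => th k + h k)
    by (apply functional_extensionality; intros; unfold h; ring).
  rewrite Loss_add by exact Hn.
  destruct (Hpre h) as [h' [Hh' Hnorm]].
  (* The loss only sees [X h], so [h] may be replaced by its short preimage [h']. *)
  replace (rsum d (fun k => h k * gradL n d X y th k))
    with (rsum d (fun k => h' k * gradL n d X y th k))
    by (rewrite !rsum_mul_gradL; f_equal; apply rsum_ext; intros i Hi;
        exact (f_equal _ (Hh' i Hi))).
  set (S := sqnorm n (matvec X d h)) in *.
  change (sqnorm n (fun i => inner d (X i) h)) with S.
  assert (Hyoung : - rsum d (fun k => h' k * gradL n d X y th k)
                   <= sqnorm d h' / (2 * c) + c / 2 * sqnorm d (gradL n d X y th)).
  { unfold sqnorm, Rdiv. rewrite <- rsum_opp, <- rsum_scal, <- rsum_scalr, <- rsum_plus.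
    apply rsum_le. intros k _. apply Young_neg_mul, Hc. }
  assert (sqnorm d h' / (2 * c) <= / (2 * INR n) * S).
  { replace (/ (2 * INR n) * S) with (K * S / (2 * c)) by (unfold c; field; lra).
    apply Rmult_le_compat_r; [apply Rlt_le, Rinv_0_lt_compat; lra | exact Hnorm]. }
  lra.
Qed.

Lemma Loss_minimizer n d X y : (0 < n)%nat ->
  exists w, forall ph, Loss n d X y w <= Loss n d X y ph.
Proof.
  intros Hn. destruct (Loss_PL n d X y Hn) as [C [HC HPL]].
  destruct (least_squares_solvable_all n d X y) as [w Hw].
  exists w. intros ph.
  assert (Hgrad0 : sqnorm d (gradL n d X y w) = 0).
  { unfold sqnorm. rewrite <- (rsum_const0 d). apply rsum_ext. intros k Hk. unfold gradL.
    rewrite (rsum_ext n _ (fun i => - (X i k * (matvec X d w i - y i))))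
      by (intros; unfold inner, matvec; ring).
    rewrite rsum_opp, Hw by exact Hk. simpl. ring. }
  specialize (HPL w ph). rewrite Hgrad0, Rmult_0_r in HPL. lra.
Qed.

Definition frob_sq (n d : nat) (X : nat -> nat -> R) : R := rsum n (fun i => sqnorm d (X i)).

Lemma sqnorm_inner_le n d X h :
  sqnorm n (fun i => inner d (X i) h) <= frob_sq n d X * sqnorm d h.
Proof.
  unfold frob_sq, sqnorm at 1. rewrite <- rsum_scalr.
  apply rsum_le. intros i _. apply Cauchy_Schwarz_rsum.
Qed.

Lemma Loss_descent n d X y Lmin : (0 < n)%nat ->
  (forall ph, Lmin <= Loss n d X y ph) ->
  forall th, INR n / (frob_sq n d X + 1) / 2 * sqnorm d (gradL n d X y th)
             <= Loss n d X y th - Lmin.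
Proof.
  intros Hn Hmin th.
  assert (Hn' : 0 < INR n) by (apply lt_0_INR; lia).
  set (b := frob_sq n d X).
  assert (Hb : 0 <= b) by (apply rsum_nonneg; intros; apply sqnorm_nonneg).
  set (G := sqnorm d (gradL n d X y th)).
  assert (HG : 0 <= G) by apply sqnorm_nonneg.
  set (eta := INR n / (b + 1)).
  assert (Heta : 0 < eta) by (apply Rdiv_lt_0_compat; lra).
  set (h := fun k => - eta * gradL n d X y th k).
  specialize (Hmin (fun k => th k + h k)). rewrite Loss_add in Hmin by exact Hn.
  assert (Hdir : rsum d (fun k => h k * gradL n d X y th k) = - eta * G).
  { unfold G, sqnorm. rewrite <- rsum_scal. apply rsum_ext. intros; unfold h; ring. }
  assert (Hquad : / (2 * INR n) * sqnorm n (fun i => inner d (X i) h) <= eta / 2 * G).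
  { apply Rle_trans with (/ (2 * INR n) * (b * (eta ^ 2 * G))).
    - apply Rmult_le_compat_l; [apply Rlt_le, Rinv_0_lt_compat; lra|].
      replace (eta ^ 2 * G) with (sqnorm d h)
        by (unfold G, sqnorm; rewrite <- rsum_scal; apply rsum_ext; intros; unfold h; ring).
      apply sqnorm_inner_le.
    - replace (/ (2 * INR n) * (b * (eta ^ 2 * G))) with ((1 - / (b + 1)) * (eta / 2 * G))
        by (unfold eta; field; lra).
      assert (0 < / (b + 1)) by (apply Rinv_0_lt_compat; lra).
      assert (0 <= eta / 2 * G) by (apply Rmult_le_pos; lra).
      nra. }
  lra.
Qed.

Lemma is_derive_eq (f : R -> R) t a b : is_derive f t a -> a = b -> is_derive f t b.
Proof. now intros H <-. Qed.

Lemma is_derive_Rconst (c t : R) : is_derive (fun _ => c) t 0.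
Proof. apply is_derive_Reals, derivable_pt_lim_const. Qed.

Lemma is_derive_Rminus (f g : R -> R) t a b :
  is_derive f t a -> is_derive g t b -> is_derive (fun s => f s - g s) t (a - b).
Proof. exact (is_derive_minus f g t a b). Qed.

Lemma is_derive_Rmult (f g : R -> R) t a b :
  is_derive f t a -> is_derive g t b -> is_derive (fun s => f s * g s) t (a * g t + f t * b).
Proof. intros Hf Hg. apply (is_derive_mult f g t a b Hf Hg). intros; apply Rmult_comm. Qed.

Lemma is_derive_exp_lin k s : is_derive (fun s => exp (k * s)) s (k * exp (k * s)).
Proof. auto_derive; [exact I | ring]. Qed.

Lemma derive_nonpos_le (h : R -> R) a :
  (forall s, a <= s -> exists dh : R, is_derive h s dh /\ dh <= 0) ->
  forall t, a <= t -> h t <= h a.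
Proof.
  intros Hd t Hat. destruct (Req_dec a t) as [<-|Hne]; [lra|].
  destruct (MVT_cor2 h (Derive h) a t) as [c [Hc Hac]]; [lra| |].
  - intros c Hc. destruct (Hd c ltac:(lra)) as [dh [Hdh _]].
    apply is_derive_Reals. now rewrite (is_derive_unique h c dh Hdh).
  - destruct (Hd c ltac:(lra)) as [dh [Hdh Hneg]].
    rewrite (is_derive_unique h c dh Hdh) in Hc.
    assert (dh * (t - a) <= 0) by (apply Rmult_le_0_r; lra).
    lra.
Qed.

Lemma Gronwall_exp (V : R -> R) kap T :
  (forall s, T <= s -> exists dV : R, is_derive V s dV /\ dV <= - kap * V s) ->
  forall s, T <= s -> V s <= exp (- kap * (s - T)) * V T.
Proof.
  intros HV s Hs.
  assert (HW : exp (kap * s) * V s <= exp (kap * T) * V T).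
  { apply (derive_nonpos_le (fun s => exp (kap * s) * V s) T); [|exact Hs].
    intros r Hr. destruct (HV r Hr) as [dV [HdV Hle]].
    exists (kap * exp (kap * r) * V r + exp (kap * r) * dV). split.
    - apply (is_derive_Rmult (fun s => exp (kap * s)) V); [|exact HdV].
      apply is_derive_exp_lin.
    - pose proof (exp_pos (kap * r)). nra. }
  assert (Hsplit : forall a, exp (- kap * s) * (exp (kap * a) * V a) = exp (- kap * (s - a)) * V a)
    by (intros; rewrite <- Rmult_assoc, <- exp_plus; do 2 f_equal; ring).
  rewrite <- (Hsplit T).
  replace (V s) with (exp (- kap * (s - s)) * V s)
    by (replace (- kap * (s - s)) with 0 by ring; rewrite exp_0; ring).
  rewrite <- Hsplit.
  apply Rmult_le_compat_l; [apply Rlt_le, exp_pos | exact HW].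
Qed.

Lemma is_lim_pos_eventually_ge (f : R -> R) (D : R) :
  (forall t, 0 <= f t) -> is_lim f p_infty D -> D <> 0 ->
  0 < D /\ exists T, forall t, T <= t -> D / 2 <= f t.
Proof.
  intros Hpos Hlim HD.
  assert (HD0 : Rbar_le 0 D)
    by (apply (is_lim_le_loc (fun _ => 0) f p_infty 0 D);
        [exists 0; intros; apply Hpos | apply is_lim_const | exact Hlim]).
  simpl in HD0. split; [lra|].
  apply is_lim_spec in Hlim. destruct (Hlim (mkposreal (D / 2) ltac:(simpl; lra))) as [M HM].
  exists (M + 1). intros t Ht. specialize (HM t ltac:(lra)). simpl in HM.
  apply Rabs_def2 in HM. lra.
Qed.

Lemma uniform_eventual_lower_bound d (f : nat -> R -> R) :
  (forall k t, 0 <= f k t) ->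
  (forall k, (k < d)%nat -> exists D : R, is_lim (f k) p_infty D /\ D <> 0) ->
  exists T c, 0 <= T /\ 0 < c /\ forall k t, (k < d)%nat -> T <= t -> c <= f k t.
Proof.
  intros Hpos. induction d as [|d IH]; intros Hlim.
  - exists 0, 1. repeat split; [lra | lra | intros; lia].
  - destruct IH as [T [c [HT [Hc Hlow]]]]; [intros; apply Hlim; lia|].
    destruct (Hlim d (Nat.lt_succ_diag_r d)) as [D [HDlim HD]].
    destruct (is_lim_pos_eventually_ge (f d) D (Hpos d) HDlim HD) as [HDpos [Td HTd]].
    exists (Rmax T Td), (Rmin c (D / 2)). repeat split.
    + eapply Rle_trans; [exact HT | apply Rmax_l].
    + apply Rmin_pos; lra.
    + intros k t Hk Ht.
      assert (T <= t /\ Td <= t) as [HTt HTdt]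
        by (split; eapply Rle_trans; [apply Rmax_l | exact Ht | apply Rmax_r | exact Ht]).
      destruct (Nat.eq_dec k d) as [->|Hne].
      * eapply Rle_trans; [apply Rmin_r | exact (HTd t HTdt)].
      * eapply Rle_trans; [apply Rmin_l | apply Hlow; [lia | exact HTt]].
Qed.

Lemma continuous_exp_lin a s : continuous (fun s => exp (a * s)) s.
Proof. apply (ex_derive_continuous (fun s => exp (a * s))). auto_derive. exact I. Qed.

Lemma continuous_Rmult (f g : R -> R) x :
  continuous f x -> continuous g x -> continuous (fun s => f s * g s) x.
Proof. exact (continuous_mult f g x). Qed.

Lemma RInt_exp_lin a lo hi : a <> 0 ->
  RInt (fun s => exp (a * s)) lo hi = (exp (a * hi) - exp (a * lo)) / a.
Proof.
  intros Ha. apply is_RInt_unique.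
  replace ((exp (a * hi) - exp (a * lo)) / a)
    with (minus (exp (a * hi) / a) (exp (a * lo) / a))
    by (unfold minus, plus, opp; simpl; field; exact Ha).
  apply (is_RInt_derive (fun s => exp (a * s) / a)).
  - intros s _. auto_derive; [exact I | field; exact Ha].
  - intros s _. apply continuous_exp_lin.
Qed.

Lemma ex_RInt_of_continuous (f : R -> R) a b :
  0 <= a <= b -> (forall s, 0 <= s -> continuous f s) -> ex_RInt f a b.
Proof.
  intros Hab Hf. apply (ex_RInt_continuous (V := R_CompleteNormedModule)).
  intros z Hz. rewrite Rmin_left in Hz by lra. apply Hf. lra.
Qed.

Lemma RInt_Rscal (f : R -> R) a b c :
  ex_RInt f a b -> RInt (fun s => c * f s) a b = c * RInt f a b.
Proof. exact (RInt_scal f a b c). Qed.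

Lemma Rabs_RInt_le (f B : R -> R) a b : a <= b -> ex_RInt f a b -> ex_RInt B a b ->
  (forall s, a <= s <= b -> Rabs (f s) <= B s) -> Rabs (RInt f a b) <= RInt B a b.
Proof.
  intros Hab Hf HB Hle. apply Rabs_le. split.
  - replace (- RInt B a b) with (RInt (fun s => - B s) a b) by exact (RInt_opp B a b HB).
    apply RInt_le; [exact Hab | exact (ex_RInt_opp B a b HB) | exact Hf |].
    intros s Hs. specialize (Hle s ltac:(lra)). apply Rabs_le_between in Hle. lra.
  - apply RInt_le; [exact Hab | exact Hf | exact HB |].
    intros s Hs. specialize (Hle s ltac:(lra)). apply Rabs_le_between in Hle. lra.
Qed.

Lemma exp_decay_eventually_lt C mu eps : 0 < mu -> 0 < eps ->
  exists M, forall x, M < x -> C * exp (- mu * x) < eps.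
Proof.
  intros Hmu Heps. destruct (Rle_lt_dec C 0) as [HC|HC].
  - exists 0. intros x _. pose proof (exp_pos (- mu * x)). nra.
  - exists (- ln (eps / C) / mu). intros x Hx.
    assert (Hlt : exp (- mu * x) < eps / C).
    { rewrite <- (exp_ln (eps / C)) by (apply Rdiv_lt_0_compat; lra).
      apply exp_increasing.
      apply (Rmult_lt_compat_l mu) in Hx; [|exact Hmu].
      replace (mu * (- ln (eps / C) / mu)) with (- ln (eps / C)) in Hx by (field; lra).
      lra. }
    apply (Rmult_lt_compat_l C) in Hlt; [|exact HC].
    replace (C * (eps / C)) with eps in Hlt by (field; lra). exact Hlt.
Qed.

Section ExponentiallyDecaying.

Variables (g : R -> R) (K mu : R).
Hypothesis mu_pos : 0 < mu.
Hypothesis g_cont : forall s, 0 <= s -> continuous g s.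
Hypothesis g_bound : forall s, 0 <= s -> Rabs (g s) <= K * exp (- mu * s).

Let K_nonneg : 0 <= K.
Proof.
  pose proof (g_bound 0 (Rle_refl 0)) as H0. rewrite Rmult_0_r, exp_0, Rmult_1_r in H0.
  pose proof (Rabs_pos (g 0)). lra.
Qed.

Let RInt_exp_decay_tail a b : 0 <= a <= b -> Rabs (RInt g a b) <= K / mu * exp (- mu * a).
Proof.
  intros Hab. pose proof K_nonneg as HK.
  eapply Rle_trans; [apply (Rabs_RInt_le g (fun s => K * exp (- mu * s)))|].
  - lra.
  - now apply ex_RInt_of_continuous.
  - apply ex_RInt_of_continuous; [exact Hab|]. intros s _.
    apply continuous_Rmult; [apply continuous_const | apply continuous_exp_lin].
  - intros s Hs. apply g_bound. lra.
  - rewrite (RInt_Rscal (fun s => exp (- mu * s)) a b K)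
      by (apply ex_RInt_of_continuous; [exact Hab | intros; apply continuous_exp_lin]).
    rewrite RInt_exp_lin by lra.
    pose proof (exp_pos (- mu * b)).
    replace (K * ((exp (- mu * b) - exp (- mu * a)) / - mu))
      with (K / mu * exp (- mu * a) - K / mu * exp (- mu * b)) by (field; lra).
    assert (0 <= K / mu * exp (- mu * b))
      by (apply Rmult_le_pos; [apply Rdiv_le_0_compat|]; lra).
    lra.
Qed.

Lemma is_lim_RInt_exp_decay : exists G : R, is_lim (fun t => RInt g 0 t) p_infty G.
Proof.
  destruct (proj1 (filterlim_locally_cauchy (F := Rbar_locally' p_infty) (fun t => RInt g 0 t)))
    as [G HG]; [|exists G; exact HG].
  intros eps. destruct (exp_decay_eventually_lt (K / mu) mu eps mu_pos (cond_pos eps)) as [M HM].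
  exists (fun t => Rmax 0 M < t). split; [exists (Rmax 0 M); auto|].
  assert (Hdist : forall a b, Rmax 0 M < a <= b -> Rabs (RInt g 0 b - RInt g 0 a) < eps).
  { intros a b Hab.
    assert (H0a : 0 <= a) by (pose proof (Rmax_l 0 M); lra).
    assert (HMa : M < a) by (pose proof (Rmax_r 0 M); lra).
    assert (Hsplit : RInt g 0 b - RInt g 0 a = RInt g a b).
    { rewrite <- (RInt_Chasles g 0 a b) by (apply ex_RInt_of_continuous; [lra | exact g_cont]).
      change (RInt g 0 a + RInt g a b - RInt g 0 a = RInt g a b). ring. }
    rewrite Hsplit.
    eapply Rle_lt_trans; [apply RInt_exp_decay_tail; lra | exact (HM a HMa)]. }
  intros a b Ha Hb. change (Rabs (RInt g 0 b - RInt g 0 a) < eps).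
  destruct (Rle_lt_dec a b) as [Hab|Hba].
  - apply Hdist. lra.
  - rewrite Rabs_minus_sym. apply Hdist. lra.
Qed.

Let RInt_exp_kernel_le lam t : 0 < lam -> mu < / lam -> 0 <= t ->
  Rabs (RInt (fun s => g s * exp (- (t - s) / lam)) 0 t) <= K / (/ lam - mu) * exp (- mu * t).
Proof.
  intros Hlam Hmu Ht. set (a := / lam - mu). assert (Ha : 0 < a) by (unfold a; lra).
  assert (Hker : forall s, continuous (fun s => exp (- (t - s) / lam)) s)
    by (intros s; apply (ex_derive_continuous (fun s => exp (- (t - s) / lam)));
        auto_derive; exact I).
  assert (Hexp : forall r, 0 <= r -> ex_RInt (fun s => exp (a * s)) 0 r)
    by (intros r Hr; apply ex_RInt_of_continuous; [lra | intros; apply continuous_exp_lin]).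
  eapply Rle_trans; [apply (Rabs_RInt_le _ (fun s => K * exp (- t / lam) * exp (a * s)))|].
  - exact Ht.
  - apply ex_RInt_of_continuous; [lra|]. intros s Hs. apply continuous_Rmult; auto.
  - apply ex_RInt_of_continuous; [lra|]. intros s _.
    apply continuous_Rmult; [apply continuous_const | apply continuous_exp_lin].
  - intros s Hs. rewrite Rabs_mult, (Rabs_pos_eq (exp _)) by (apply Rlt_le, exp_pos).
    replace (K * exp (- t / lam) * exp (a * s))
      with (K * exp (- mu * s) * exp (- (t - s) / lam))
      by (rewrite !Rmult_assoc, <- !exp_plus; do 2 f_equal; unfold a; field; lra).
    apply Rmult_le_compat_r; [apply Rlt_le, exp_pos | apply g_bound; lra].
  - rewrite RInt_Rscal, RInt_exp_lin by (lra || exact (Hexp t Ht)).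
    rewrite Rmult_0_r, exp_0.
    assert (E : exp (- t / lam) * exp (a * t) = exp (- mu * t))
      by (rewrite <- exp_plus; f_equal; unfold a; field; lra).
    replace (K * exp (- t / lam) * ((exp (a * t) - 1) / a))
      with (K / a * exp (- mu * t) - K / a * exp (- t / lam)) by (rewrite <- E; field; lra).
    assert (0 <= K / a * exp (- t / lam)).
    { apply Rmult_le_pos; [apply Rdiv_le_0_compat|apply Rlt_le, exp_pos].
      - exact K_nonneg.
      - exact Ha. }
    lra.
Qed.

Lemma is_lim_RInt_exp_kernel lam : 0 < lam -> mu < / lam ->
  is_lim (fun t => RInt (fun s => g s * exp (- (t - s) / lam)) 0 t) p_infty 0.
Proof.
  intros Hlam Hmu. apply is_lim_spec. intros eps.
  destruct (exp_decay_eventually_lt (K / (/ lam - mu)) mu eps mu_pos (cond_pos eps)) as [M HM].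
  exists (Rmax 0 M). intros t Ht. rewrite Rminus_0_r.
  pose proof (Rmax_l 0 M). pose proof (Rmax_r 0 M).
  eapply Rle_lt_trans; [apply RInt_exp_kernel_le | apply HM]; lra.
Qed.

End ExponentiallyDecaying.

Lemma Rabs_le_exp_of_sq (g : R -> R) B kap mu : 0 <= mu -> 2 * mu <= kap ->
  (forall s, 0 <= s -> g s ^ 2 <= B * exp (- kap * s)) ->
  forall s, 0 <= s -> Rabs (g s) <= sqrt B * exp (- mu * s).
Proof.
  intros Hmu Hkap Hsq s Hs.
  assert (HB : 0 <= B).
  { pose proof (Hsq 0 (Rle_refl 0)) as H0. rewrite Rmult_0_r, exp_0, Rmult_1_r in H0.
    pose proof (pow2_ge_0 (g 0)). lra. }
  assert (Hexp : exp (- kap * s) <= exp (- mu * s) ^ 2).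
  { rewrite <- Rsqr_pow2. unfold Rsqr. rewrite <- exp_plus.
    destruct (Req_dec (- kap * s) (- mu * s + - mu * s)) as [->|Hne]; [lra|].
    apply Rlt_le, exp_increasing. nra. }
  rewrite <- (Rabs_pos_eq (sqrt B * exp (- mu * s)))
    by (apply Rmult_le_pos; [apply sqrt_pos | apply Rlt_le, exp_pos]).
  apply Rsqr_le_abs_0. rewrite !Rsqr_pow2, Rpow_mult_distr, pow2_sqrt by exact HB.
  specialize (Hsq s Hs). pose proof (Rmult_le_compat_l B _ _ HB Hexp). lra.
Qed.

Lemma energy_nonincreasing lam (P Z ell : R -> R) : 0 < lam ->
  (forall s, 0 <= s -> is_derive ell s (Z s)) ->
  (forall s, 0 <= s -> is_derive P s (- 2 / lam * (P s + Z s))) ->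
  (forall s, 0 <= s -> 0 <= P s) ->
  forall t, 0 <= t -> lam / 2 * P t + ell t <= lam / 2 * P 0 + ell 0.
Proof.
  intros Hlam Hell HP HPpos.
  apply (derive_nonpos_le (fun s => lam / 2 * P s + ell s) 0).
  intros s Hs. exists (- P s). split.
  - eapply is_derive_eq.
    + apply (is_derive_plus (fun s => lam / 2 * P s) ell);
        [apply is_derive_scal, HP, Hs | apply Hell, Hs].
    + change (lam / 2 * (-2 / lam * (P s + Z s)) + Z s = - P s). field. lra.
  - specialize (HPpos s Hs). lra.
Qed.

Section Lyapunov.

Variables (lam c1 c2 C T : R) (P Z N ell : R -> R).
Hypotheses (lam_pos : 0 < lam) (c1_nonneg : 0 <= c1) (c2_pos : 0 < c2) (C_pos : 0 < C)
  (T_nonneg : 0 <= T).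
Hypothesis ell_derive : forall s, 0 <= s -> is_derive ell s (Z s).
Hypothesis P_derive : forall s, 0 <= s -> is_derive P s (- 2 / lam * (P s + Z s)).
Hypothesis Z_derive : forall s, 0 <= s ->
  exists dZ : R, is_derive Z s dZ /\ lam * dZ <= - Z s - N s + lam * c1 * P s.
Hypothesis P_nonneg : forall s, 0 <= s -> 0 <= P s.
Hypothesis N_nonneg : forall s, 0 <= s -> 0 <= N s.
Hypothesis Z_bound : forall s, 0 <= s -> Rabs (Z s) <= (P s + N s) / 2.
Hypothesis ell_lower : forall s, 0 <= s -> c2 * N s <= ell s.
Hypothesis ell_upper : forall s, T <= s -> ell s <= C * N s.

Let eps := Rmin c2 (lam / (2 + 2 * lam * c1)).
Let V s := lam / 2 * P s + ell s + eps * Z s.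

Let eps_bounds : 0 < eps /\ eps <= c2 /\ eps <= lam / 2 /\ eps * (1 + 2 * lam * c1) <= lam.
Proof.
  assert (Hden : 0 < 2 + 2 * lam * c1) by nra.
  assert (Hfrac : 0 < lam / (2 + 2 * lam * c1)) by (apply Rdiv_lt_0_compat; lra).
  assert (Hle : eps <= lam / (2 + 2 * lam * c1)) by apply Rmin_r.
  assert (Hmul : eps * (2 + 2 * lam * c1) <= lam).
  { apply (Rmult_le_compat_r (2 + 2 * lam * c1)) in Hle; [|lra].
    replace (lam / (2 + 2 * lam * c1) * (2 + 2 * lam * c1)) with lam in Hle by (field; lra).
    exact Hle. }
  repeat split.
  - apply Rmin_pos; lra.
  - apply Rmin_l.
  - assert (0 <= eps * (2 * lam * c1)) by (apply Rmult_le_pos; [apply Rlt_le, Rmin_pos|]; nra). lra.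
  - assert (0 <= eps) by (apply Rlt_le, Rmin_pos; lra). nra.
Qed.

Let V_derive s : 0 <= s ->
  exists dV : R, is_derive V s dV /\ lam * dV <= - (lam / 2) * P s - (eps / 2) * N s.
Proof.
  intros Hs. destruct eps_bounds as [He [_ [_ He3]]].
  destruct (Z_derive s Hs) as [dZ [HdZ HdZle]].
  exists (- P s + eps * dZ). split.
  - eapply is_derive_eq.
    + apply (is_derive_plus (fun s => lam / 2 * P s + ell s) (fun s => eps * Z s));
        [apply (is_derive_plus (fun s => lam / 2 * P s) ell) | ].
      * apply is_derive_scal, P_derive, Hs.
      * apply ell_derive, Hs.
      * apply is_derive_scal, HdZ.
    + change (lam / 2 * (-2 / lam * (P s + Z s)) + Z s + eps * dZ = - P s + eps * dZ).
      field. lra.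
  - pose proof (P_nonneg s Hs). pose proof (N_nonneg s Hs).
    pose proof (Z_bound s Hs) as HZ. apply Rabs_le_between in HZ.
    assert (eps * (lam * dZ) <= eps * (- Z s - N s + lam * c1 * P s))
      by (apply Rmult_le_compat_l; lra).
    assert (eps * (- Z s) <= eps * ((P s + N s) / 2)) by (apply Rmult_le_compat_l; lra).
    assert (eps * (1 + 2 * lam * c1) * P s <= lam * P s) by (apply Rmult_le_compat_r; lra).
    nra.
Qed.

Let V_lower s : 0 <= s -> c2 / 2 * N s <= V s.
Proof.
  intros Hs. destruct eps_bounds as [He [He1 [He2 _]]].
  pose proof (P_nonneg s Hs). pose proof (N_nonneg s Hs). pose proof (ell_lower s Hs).
  pose proof (Z_bound s Hs) as HZ. apply Rabs_le_between in HZ.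
  assert (eps * (- Z s) <= eps * ((P s + N s) / 2)) by (apply Rmult_le_compat_l; lra).
  unfold V. nra.
Qed.

Let V_upper s : T <= s -> V s <= (lam + C + eps) * (P s + N s).
Proof.
  intros HTs. assert (Hs : 0 <= s) by lra. destruct eps_bounds as [He _].
  pose proof (P_nonneg s Hs). pose proof (N_nonneg s Hs). pose proof (ell_upper s HTs).
  pose proof (Z_bound s Hs) as HZ. apply Rabs_le_between in HZ.
  assert (eps * Z s <= eps * ((P s + N s) / 2)) by (apply Rmult_le_compat_l; lra).
  unfold V. nra.
Qed.

Let V_decay : exists kap, 0 < kap /\
  forall s, T <= s -> exists dV : R, is_derive V s dV /\ dV <= - kap * V s.
Proof.
  destruct eps_bounds as [He _].
  set (m := Rmin (lam / 2) (eps / 2)). assert (Hm : 0 < m) by (apply Rmin_pos; lra).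
  set (CV := lam + C + eps). assert (HCV : 0 < CV) by (unfold CV; lra).
  exists (m / (lam * CV)). split; [apply Rdiv_lt_0_compat; nra|].
  intros s HTs. assert (Hs : 0 <= s) by lra.
  destruct (V_derive s Hs) as [dV [HdV Hle]]. exists dV. split; [exact HdV|].
  pose proof (P_nonneg s Hs). pose proof (N_nonneg s Hs).
  pose proof (V_upper s HTs) as HVup. fold CV in HVup.
  assert (m * P s <= lam / 2 * P s) by (apply Rmult_le_compat_r; [lra | apply Rmin_l]).
  assert (m * N s <= eps / 2 * N s) by (apply Rmult_le_compat_r; [lra | apply Rmin_r]).
  assert (Hm_V : m * V s <= m * (CV * (P s + N s))) by (apply Rmult_le_compat_l; lra).
  apply (Rmult_le_reg_l lam); [exact lam_pos|].
  replace (lam * (- (m / (lam * CV)) * V s)) with (- (m * V s) / CV) by (field; lra).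
  apply (Rmult_le_reg_l CV); [exact HCV|].
  replace (CV * (- (m * V s) / CV)) with (- (m * V s)) by (field; lra).
  nra.
Qed.

Lemma lyapunov_exp_decay :
  exists B kap, 0 < kap /\ forall s, T <= s -> N s <= B * exp (- kap * s).
Proof.
  destruct V_decay as [kap [Hkap Hdecay]].
  exists (2 / c2 * V T * exp (kap * T)), kap. split; [exact Hkap|].
  intros s HTs.
  pose proof (Gronwall_exp V kap T Hdecay s HTs) as HV.
  pose proof (V_lower s ltac:(lra)) as Hlow.
  replace (2 / c2 * V T * exp (kap * T) * exp (- kap * s))
    with (2 / c2 * (exp (- kap * (s - T)) * V T))
    by (replace (- kap * (s - T)) with (kap * T + - kap * s) by ring; rewrite exp_plus; ring).
  apply (Rmult_le_reg_l (c2 / 2)); [lra|].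
  replace (c2 / 2 * (2 / c2 * (exp (- kap * (s - T)) * V T))) with (exp (- kap * (s - T)) * V T)
    by (field; lra).
  lra.
Qed.

End Lyapunov.

Definition hessL (n d : nat) (X : nat -> nat -> R) (h : nat -> R) (j : nat) : R :=
  / INR n * rsum n (fun i => inner d (X i) h * X i j).

Lemma rsum_mul_hessL n d X h :
  rsum d (fun k => h k * hessL n d X h k) = / INR n * sqnorm n (fun i => inner d (X i) h).
Proof.
  unfold hessL.
  rewrite (rsum_ext d _ (fun k => / INR n * rsum n (fun i => inner d (X i) h * (X i k * h k))))
    by (intros; rewrite <- !rsum_scal; apply rsum_ext; intros; ring).
  rewrite rsum_scal, rsum_exchange. f_equal. apply rsum_ext. intros i _.
  rewrite rsum_scal. fold (inner d (X i) h). ring.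
Qed.

Lemma is_derive_inner d (a : nat -> R) (F : R -> nat -> R) dF t :
  (forall k, (k < d)%nat -> is_derive (fun s => F s k) t (dF k)) ->
  is_derive (fun s => inner d a (F s)) t (inner d a dF).
Proof.
  intros HF. apply (is_derive_rsum d (fun k s => a k * F s k) (fun k _ => a k * dF k)).
  intros k Hk. apply is_derive_scal, HF, Hk.
Qed.

Lemma is_derive_gradL n d X y (F : R -> nat -> R) dF t j :
  (forall k, (k < d)%nat -> is_derive (fun s => F s k) t (dF k)) ->
  is_derive (fun s => gradL n d X y (F s) j) t (hessL n d X dF j).
Proof.
  intros HF. unfold gradL, hessL. eapply is_derive_eq.
  - apply is_derive_scal.
    apply (is_derive_rsum n (fun i s => (y i - inner d (X i) (F s)) * X i j)
             (fun i _ => (0 - inner d (X i) dF) * X i j + (y i - inner d (X i) (F t)) * 0)).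
    intros i _. apply (is_derive_Rmult (fun s => y i - inner d (X i) (F s)) (fun _ => X i j)).
    + apply is_derive_Rminus; [apply is_derive_Rconst | apply is_derive_inner, HF].
    + apply is_derive_Rconst.
  - rewrite <- !rsum_scal. apply rsum_ext. intros; ring.
Qed.

Lemma is_derive_Loss n d X y (F : R -> nat -> R) dF t : (0 < n)%nat ->
  (forall k, (k < d)%nat -> is_derive (fun s => F s k) t (dF k)) ->
  is_derive (fun s => Loss n d X y (F s)) t (rsum d (fun k => dF k * gradL n d X y (F t) k)).
Proof.
  intros Hn HF. assert (Hn0 : INR n <> 0) by (apply not_0_INR; lia).
  rewrite rsum_mul_gradL. unfold Loss. eapply is_derive_eq.
  - apply is_derive_scal.
    apply (is_derive_rsum n (fun i s => (y i - inner d (X i) (F s)) ^ 2)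
             (fun i _ => INR 2 * (0 - inner d (X i) dF) * (y i - inner d (X i) (F t)) ^ 1)).
    intros i _. apply (is_derive_pow (fun s => y i - inner d (X i) (F s))).
    apply is_derive_Rminus; [apply is_derive_Rconst | apply is_derive_inner, HF].
  - rewrite <- !rsum_scal. apply rsum_ext. intros. simpl. field. exact Hn0.
Qed.

Lemma Rabs_mul_add_le a b c e : Rabs (a * b + c * e) <= (a ^ 2 + b ^ 2 + c ^ 2 + e ^ 2) / 2.
Proof.
  apply Rabs_le. pose proof (pow2_ge_0 (a + b)). pose proof (pow2_ge_0 (c + e)).
  pose proof (pow2_ge_0 (a - b)). pose proof (pow2_ge_0 (c - e)). split; nra.
Qed.

Lemma sq_mul_add_le a b c e : (a * b + c * e) ^ 2 <= 2 * (a ^ 2 * b ^ 2 + c ^ 2 * e ^ 2).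
Proof. pose proof (pow2_ge_0 (a * b - c * e)). nra. Qed.

Lemma two_mul_le_Rabs g a b G : Rabs g <= G -> 2 * g * a * b <= G * (a ^ 2 + b ^ 2).
Proof.
  intros Hg. pose proof (pow2_ge_0 (a - b)). pose proof (pow2_ge_0 (a + b)).
  assert (2 * g * a * b <= Rabs g * (a ^ 2 + b ^ 2)).
  { destruct (Rle_lt_dec 0 g).
    - rewrite Rabs_pos_eq by lra. nra.
    - rewrite Rabs_left by lra. nra. }
  assert (Rabs g * (a ^ 2 + b ^ 2) <= G * (a ^ 2 + b ^ 2)) by (apply Rmult_le_compat_r; nra).
  lra.
Qed.

Lemma momentum_accel_mul_grad lam a b da db dda ddb g G : 0 < lam ->
  lam * dda + da + g * b = 0 -> lam * ddb + db + g * a = 0 -> Rabs g <= G ->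
  lam * ((dda * b + da * db + (da * db + a * ddb)) * g)
  <= - ((da * b + a * db) * g) - g ^ 2 * (a ^ 2 + b ^ 2) + lam * G * (da ^ 2 + db ^ 2).
Proof.
  intros Hlam Ea Eb Hg.
  replace (lam * ((dda * b + da * db + (da * db + a * ddb)) * g))
    with ((lam * dda) * b * g + lam * (2 * g * da * db) + a * (lam * ddb) * g) by ring.
  replace (lam * dda) with (- da - g * b) by lra.
  replace (lam * ddb) with (- db - g * a) by lra.
  assert (lam * (2 * g * da * db) <= lam * (G * (da ^ 2 + db ^ 2)))
    by (apply Rmult_le_compat_l; [lra | apply two_mul_le_Rabs, Hg]).
  lra.
Qed.

Section MomentumFlow.

Variables (n d : nat) (X : nat -> nat -> R) (y : nat -> R) (lam M : R)
  (u v du dv ddu ddv : nat -> R -> R) (w : nat -> R).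
Hypothesis n_pos : (0 < n)%nat.
Hypothesis lam_pos : 0 < lam.
Hypothesis flow_derive : forall j t, (j < d)%nat -> 0 <= t ->
  is_derive (u j) t (du j t) /\ is_derive (v j) t (dv j t) /\
  is_derive (du j) t (ddu j t) /\ is_derive (dv j) t (ddv j t).
Hypothesis flow_ode : forall j t, (j < d)%nat -> 0 <= t ->
  lam * ddu j t + du j t + gradL n d X y (theta_of u v t) j * v j t = 0 /\
  lam * ddv j t + dv j t + gradL n d X y (theta_of u v t) j * u j t = 0.
Hypothesis uv_bounded : forall j t, (j < d)%nat -> 0 <= t -> Rabs (u j t) <= M /\ Rabs (v j t) <= M.
Hypothesis w_minimizer : forall ph, Loss n d X y w <= Loss n d X y ph.
Hypothesis Delta_limit : forall j, (j < d)%nat -> exists Dinf : R,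
  is_lim (fun t => Rabs (u j t ^ 2 - v j t ^ 2)) p_infty Dinf /\ Dinf <> 0.

Let g s k := gradL n d X y (theta_of u v s) k.
Let dtheta s k := du k s * v k s + u k s * dv k s.
Let ddtheta s k := ddu k s * v k s + du k s * dv k s + (du k s * dv k s + u k s * ddv k s).
Let kin s := rsum d (fun k => du k s ^ 2 + dv k s ^ 2).
Let cross s := rsum d (fun k => dtheta s k * g s k).
Let wgrad s := rsum d (fun k => g s k ^ 2 * (u k s ^ 2 + v k s ^ 2)).
Let excess s := Loss n d X y (theta_of u v s) - Loss n d X y w.

Let theta_derive s k : 0 <= s -> (k < d)%nat ->
  is_derive (fun r => theta_of u v r k) s (dtheta s k).
Proof.
  intros Hs Hk. destruct (flow_derive k s Hk Hs) as [Hu [Hv _]].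
  exact (is_derive_Rmult (u k) (v k) s _ _ Hu Hv).
Qed.

Let dtheta_derive s k : 0 <= s -> (k < d)%nat ->
  is_derive (fun r => dtheta r k) s (ddtheta s k).
Proof.
  intros Hs Hk. destruct (flow_derive k s Hk Hs) as [Hu [Hv [Hdu Hdv]]].
  apply (is_derive_plus (fun r => du k r * v k r) (fun r => u k r * dv k r));
    apply is_derive_Rmult; assumption.
Qed.

Let excess_derive s : 0 <= s -> is_derive excess s (cross s).
Proof.
  intros Hs. eapply is_derive_eq.
  - apply (is_derive_Rminus (fun r => Loss n d X y (theta_of u v r)) (fun _ => Loss n d X y w)).
    + apply (is_derive_Loss n d X y (theta_of u v) (dtheta s) s n_pos).
      intros k Hk. now apply theta_derive.
    + apply is_derive_Rconst.
  - apply Rminus_0_r.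
Qed.

Let kin_derive s : 0 <= s -> is_derive kin s (- 2 / lam * (kin s + cross s)).
Proof.
  intros Hs. eapply is_derive_eq.
  - apply (is_derive_rsum d (fun k r => du k r ^ 2 + dv k r ^ 2)
             (fun k r => 2 * ddu k r * du k r + 2 * ddv k r * dv k r)).
    intros k Hk. destruct (flow_derive k s Hk Hs) as [_ [_ [Hdu Hdv]]].
    apply (is_derive_plus (fun r => du k r ^ 2) (fun r => dv k r ^ 2));
      (eapply is_derive_eq; [apply is_derive_pow; eassumption | simpl; ring]).
  - unfold kin, cross. rewrite <- rsum_plus, <- rsum_scal. apply rsum_ext. intros k Hk.
    destruct (flow_ode k s Hk Hs) as [Ea Eb]. fold (g s k) in Ea, Eb.
    apply (Rmult_eq_reg_l lam); [|lra].
    replace (lam * (2 * ddu k s * du k s + 2 * ddv k s * dv k s))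
      with (2 * du k s * (lam * ddu k s) + 2 * dv k s * (lam * ddv k s)) by ring.
    replace (lam * ddu k s) with (- du k s - g s k * v k s) by lra.
    replace (lam * ddv k s) with (- dv k s - g s k * u k s) by lra.
    unfold dtheta. field. lra.
Qed.

Let kin_nonneg s : 0 <= kin s.
Proof.
  apply rsum_nonneg. intros k _.
  pose proof (pow2_ge_0 (du k s)). pose proof (pow2_ge_0 (dv k s)). lra.
Qed.

Let wgrad_nonneg s : 0 <= wgrad s.
Proof.
  apply rsum_nonneg. intros k _. apply Rmult_le_pos; [apply pow2_ge_0|].
  pose proof (pow2_ge_0 (u k s)). pose proof (pow2_ge_0 (v k s)). lra.
Qed.

Let cross_abs_le s : Rabs (cross s) <= (kin s + wgrad s) / 2.
Proof.
  eapply Rle_trans; [apply Rabs_rsum_le|].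
  unfold kin, wgrad, Rdiv. rewrite <- rsum_plus, <- rsum_scalr. apply rsum_le. intros k _.
  replace (dtheta s k * g s k) with (du k s * (v k s * g s k) + dv k s * (u k s * g s k))
    by (unfold dtheta; ring).
  eapply Rle_trans; [apply Rabs_mul_add_le | right; field].
Qed.

Let energy_bound s : 0 <= s -> lam / 2 * kin s + excess s <= lam / 2 * kin 0 + excess 0.
Proof.
  exact (energy_nonincreasing lam kin cross excess lam_pos excess_derive kin_derive
           (fun s _ => kin_nonneg s) s).
Qed.

Let eta := INR n / (frob_sq n d X + 1) / 2.

Let eta_pos : 0 < eta.
Proof.
  assert (0 < INR n) by (apply lt_0_INR; lia).
  assert (0 <= frob_sq n d X) by (apply rsum_nonneg; intros; apply sqnorm_nonneg).
  unfold eta. apply Rdiv_lt_0_compat; [apply Rdiv_lt_0_compat|]; lra.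
Qed.

Let grad_descent s : eta * sqnorm d (g s) <= excess s.
Proof. exact (Loss_descent n d X y _ n_pos w_minimizer (theta_of u v s)). Qed.

Let grad_bounded : exists G, 0 <= G /\ forall s k, 0 <= s -> (k < d)%nat -> Rabs (g s k) <= G.
Proof.
  set (E0 := lam / 2 * kin 0 + excess 0).
  exists (sqrt (E0 / eta)). split; [apply sqrt_pos|]. intros s k Hs Hk.
  rewrite <- sqrt_Rsqr_abs. apply sqrt_le_1_alt. rewrite Rsqr_pow2.
  eapply Rle_trans; [apply (sqnorm_term_le d (g s) k Hk)|].
  pose proof eta_pos. apply (Rmult_le_reg_l eta); [lra|].
  replace (eta * (E0 / eta)) with E0 by (field; lra).
  pose proof (grad_descent s). pose proof (energy_bound s Hs). pose proof (kin_nonneg s).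
  assert (0 <= lam / 2 * kin s) by (apply Rmult_le_pos; lra).
  unfold E0. lra.
Qed.

Let sqnorm_dtheta_le s : 0 <= s -> sqnorm d (dtheta s) <= 2 * M ^ 2 * kin s.
Proof.
  intros Hs. unfold sqnorm, kin. rewrite <- rsum_scal. apply rsum_le. intros k Hk.
  destruct (uv_bounded k s Hk Hs) as [Hu Hv].
  pose proof (pow_maj_Rabs M (u k s) 2 Hu). pose proof (pow_maj_Rabs M (v k s) 2 Hv).
  pose proof (pow2_ge_0 (du k s)). pose proof (pow2_ge_0 (dv k s)).
  eapply Rle_trans; [apply sq_mul_add_le|]. nra.
Qed.

Let cross_derive_le G : (forall s k, 0 <= s -> (k < d)%nat -> Rabs (g s k) <= G) ->
  forall s, 0 <= s -> exists dZ : R, is_derive cross s dZ /\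
    lam * dZ <= - cross s - wgrad s + lam * (G + 2 * frob_sq n d X * M ^ 2 / INR n) * kin s.
Proof.
  intros HG s Hs. assert (0 < INR n) by (apply lt_0_INR; lia).
  exists (rsum d (fun k => ddtheta s k * g s k + dtheta s k * hessL n d X (dtheta s) k)). split.
  - apply (is_derive_rsum d (fun k r => dtheta r k * g r k)
             (fun k r => ddtheta r k * g r k + dtheta r k * hessL n d X (dtheta r) k)).
    intros k Hk. apply (is_derive_Rmult (fun r => dtheta r k) (fun r => g r k)).
    + now apply dtheta_derive.
    + apply (is_derive_gradL n d X y (theta_of u v) (dtheta s) s k).
      intros; now apply theta_derive.
  - rewrite rsum_plus, rsum_mul_hessL, Rmult_plus_distr_l.
    assert (Hacc : lam * rsum d (fun k => ddtheta s k * g s k)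
                   <= - cross s - wgrad s + lam * G * kin s).
    { assert (E : - cross s - wgrad s + lam * G * kin s =
        rsum d (fun k => - (dtheta s k * g s k) - g s k ^ 2 * (u k s ^ 2 + v k s ^ 2)
                         + lam * G * (du k s ^ 2 + dv k s ^ 2)))
        by (rewrite rsum_plus, rsum_minus, rsum_opp, rsum_scal; reflexivity).
      rewrite E, <- rsum_scal. apply rsum_le. intros k Hk.
      destruct (flow_ode k s Hk Hs) as [Ea Eb].
      apply momentum_accel_mul_grad; auto. }
    assert (Hhess : lam * (/ INR n * sqnorm n (fun i => inner d (X i) (dtheta s)))
                    <= lam * (2 * frob_sq n d X * M ^ 2 / INR n) * kin s).
    { pose proof (sqnorm_inner_le n d X (dtheta s)). pose proof (sqnorm_dtheta_le s Hs).
      assert (0 <= frob_sq n d X) by (apply rsum_nonneg; intros; apply sqnorm_nonneg).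
      replace (lam * (2 * frob_sq n d X * M ^ 2 / INR n) * kin s)
        with (lam * / INR n * (frob_sq n d X * (2 * M ^ 2 * kin s))) by (field; lra).
      rewrite <- Rmult_assoc. apply Rmult_le_compat_l.
      - apply Rmult_le_pos; [lra | apply Rlt_le, Rinv_0_lt_compat; lra].
      - eapply Rle_trans; [eassumption|]. apply Rmult_le_compat_l; assumption. }
    replace (lam * (G + 2 * frob_sq n d X * M ^ 2 / INR n) * kin s)
      with (lam * G * kin s + lam * (2 * frob_sq n d X * M ^ 2 / INR n) * kin s) by ring.
    lra.
Qed.

Let excess_lower s : 0 <= s -> eta / (2 * M ^ 2 + 1) * wgrad s <= excess s.
Proof.
  intros Hs. pose proof eta_pos. pose proof (pow2_ge_0 M).
  assert (Hw : wgrad s <= (2 * M ^ 2 + 1) * sqnorm d (g s)).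
  { unfold wgrad, sqnorm. rewrite <- rsum_scal. apply rsum_le. intros k Hk.
    destruct (uv_bounded k s Hk Hs) as [Hu Hv].
    pose proof (pow_maj_Rabs M (u k s) 2 Hu). pose proof (pow_maj_Rabs M (v k s) 2 Hv).
    pose proof (pow2_ge_0 (g s k)). nra. }
  eapply Rle_trans; [|apply grad_descent].
  apply (Rmult_le_compat_l (eta / (2 * M ^ 2 + 1))) in Hw;
    [|apply Rlt_le, Rdiv_lt_0_compat; lra].
  replace (eta / (2 * M ^ 2 + 1) * ((2 * M ^ 2 + 1) * sqnorm d (g s)))
    with (eta * sqnorm d (g s)) in Hw by (field; lra).
  exact Hw.
Qed.

Let wgrad_ge c s : (forall k, (k < d)%nat -> c <= Rabs (u k s ^ 2 - v k s ^ 2)) ->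
  c * sqnorm d (g s) <= wgrad s.
Proof.
  intros Hc. unfold sqnorm, wgrad. rewrite <- rsum_scal. apply rsum_le. intros k Hk.
  assert (Rabs (u k s ^ 2 - v k s ^ 2) <= u k s ^ 2 + v k s ^ 2)
    by (apply Rabs_le; pose proof (pow2_ge_0 (u k s)); pose proof (pow2_ge_0 (v k s)); lra).
  specialize (Hc k Hk). pose proof (pow2_ge_0 (g s k)).
  rewrite (Rmult_comm c). apply Rmult_le_compat_l; lra.
Qed.

Let excess_le_wgrad C c s : 0 < C -> 0 < c ->
  excess s <= C * sqnorm d (g s) ->
  (forall k, (k < d)%nat -> c <= Rabs (u k s ^ 2 - v k s ^ 2)) -> excess s <= C / c * wgrad s.
Proof.
  intros HC Hc HPL Hlow. pose proof (wgrad_ge c s Hlow) as Hw.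
  eapply Rle_trans; [exact HPL|].
  replace (C / c * wgrad s) with (C * (wgrad s / c)) by (field; lra).
  apply Rmult_le_compat_l; [lra|].
  apply (Rmult_le_reg_l c); [lra|]. replace (c * (wgrad s / c)) with (wgrad s) by (field; lra).
  exact Hw.
Qed.

Let grad_sqnorm_exp_decay : exists T B kap, 0 < kap /\
  forall s, T <= s -> sqnorm d (g s) <= B * exp (- kap * s).
Proof.
  destruct (uniform_eventual_lower_bound d (fun k t => Rabs (u k t ^ 2 - v k t ^ 2)))
    as [T [cD [HT [HcD Hlow]]]]; [intros; apply Rabs_pos | exact Delta_limit |].
  destruct grad_bounded as [G [HG0 HG]].
  destruct (Loss_PL n d X y n_pos) as [Cpl [HCpl HPL]].
  assert (Hn : 0 < INR n) by (apply lt_0_INR; lia).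
  pose proof eta_pos. pose proof (pow2_ge_0 M).
  assert (0 <= frob_sq n d X) by (apply rsum_nonneg; intros; apply sqnorm_nonneg).
  edestruct (lyapunov_exp_decay lam (G + 2 * frob_sq n d X * M ^ 2 / INR n)
               (eta / (2 * M ^ 2 + 1)) (Cpl / cD) T kin cross wgrad excess)
    as [B [kap [Hkap Hdecay]]].
  - exact lam_pos.
  - assert (0 <= 2 * frob_sq n d X * M ^ 2 / INR n)
      by (apply Rmult_le_pos; [nra | apply Rlt_le, Rinv_0_lt_compat; lra]).
    lra.
  - apply Rdiv_lt_0_compat; lra.
  - apply Rdiv_lt_0_compat; lra.
  - exact HT.
  - exact excess_derive.
  - exact kin_derive.
  - exact (cross_derive_le G HG).
  - intros s _. apply kin_nonneg.
  - intros s _. apply wgrad_nonneg.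
  - intros s _. apply cross_abs_le.
  - exact excess_lower.
  - intros s HTs. exact (excess_le_wgrad Cpl cD s HCpl HcD (HPL (theta_of u v s) w)
                             (fun k Hk => Hlow k s Hk HTs)).
  - exists T, (B / cD), kap. split; [exact Hkap|]. intros s HTs.
    pose proof (wgrad_ge cD s (fun k Hk => Hlow k s Hk HTs)). pose proof (Hdecay s HTs).
    apply (Rmult_le_reg_l cD); [lra|].
    replace (cD * (B / cD * exp (- kap * s))) with (B * exp (- kap * s)) by (field; lra).
    lra.
Qed.

Lemma grad_coord_exp_decay j : (j < d)%nat ->
  exists K mu, 0 < mu /\ mu < / lam /\ forall s, 0 <= s -> Rabs (g s j) <= K * exp (- mu * s).
Proof.
  intros Hj.
  destruct grad_sqnorm_exp_decay as [T [B [kap [Hkap Hdecay]]]].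
  destruct grad_bounded as [G [HG0 HG]].
  set (mu := Rmin (kap / 2) (/ (2 * lam))).
  assert (Hmu : 0 < mu) by (apply Rmin_pos; [lra | apply Rinv_0_lt_compat; lra]).
  exists (sqrt (Rmax B (G ^ 2 * exp (kap * T)))), mu. repeat split; [exact Hmu | |].
  - eapply Rle_lt_trans; [apply Rmin_r | apply Rinv_lt_contravar; nra].
  - assert (Hmu_kap : mu <= kap / 2) by apply Rmin_l.
    apply (Rabs_le_exp_of_sq (fun s => g s j) _ kap mu); [lra | lra |].
    intros s Hs. pose proof (exp_pos (- kap * s)).
    destruct (Rle_lt_dec T s) as [HTs|HsT].
    + eapply Rle_trans; [apply (sqnorm_term_le d (g s) j Hj)|].
      eapply Rle_trans; [apply (Hdecay s HTs)|].
      apply Rmult_le_compat_r; [lra | apply Rmax_l].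
    + eapply Rle_trans with (G ^ 2).
      { apply pow_maj_Rabs, HG; assumption. }
      eapply Rle_trans; [|apply Rmult_le_compat_r; [lra | apply Rmax_r]].
      rewrite Rmult_assoc, <- exp_plus.
      assert (1 <= exp (kap * T + - kap * s)).
      { rewrite <- exp_0. destruct (Req_dec (kap * T + - kap * s) 0) as [->|]; [lra|].
        apply Rlt_le, exp_increasing. nra. }
      pose proof (pow2_ge_0 G). nra.
Qed.

Lemma grad_coord_continuous j s : (j < d)%nat -> 0 <= s -> continuous (fun r => g r j) s.
Proof.
  intros Hj Hs. apply (ex_derive_continuous (fun r => g r j)). exists (hessL n d X (dtheta s) j).
  apply (is_derive_gradL n d X y (theta_of u v) (dtheta s) s j).
  intros; now apply theta_derive.
Qed.

End MomentumFlow.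

Theorem lemma3 (n d : nat) (X : nat -> nat -> R) (y : nat -> R) (lam : R)
  (u v du dv ddu ddv : nat -> R -> R) :
  (0 < n)%nat ->
  0 < lam ->
  (* (u,v) is a C^2-type solution of momentum gradient flow on t >= 0 *)
  (forall j t, (j < d)%nat -> 0 <= t ->
     is_derive (u j) t (du j t) /\ is_derive (v j) t (dv j t) /\
     is_derive (du j) t (ddu j t) /\ is_derive (dv j) t (ddv j t)) ->
  (forall j t, (j < d)%nat -> 0 <= t ->
     lam * ddu j t + du j t + gradL n d X y (theta_of u v t) j * v j t = 0 /\
     lam * ddv j t + dv j t + gradL n d X y (theta_of u v t) j * u j t = 0) ->
  (* zero initial velocity *)
  (forall j, (j < d)%nat -> du j 0 = 0 /\ dv j 0 = 0) ->
  (* |u_0^2 - v_0^2| has all coordinates nonzero *)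
  (forall j, (j < d)%nat -> Rabs (u j 0 ^ 2 - v j 0 ^ 2) <> 0) ->
  (* u, v in L^infty(0, infty) *)
  (exists M, forall j t, (j < d)%nat -> 0 <= t -> Rabs (u j t) <= M /\ Rabs (v j t) <= M) ->
  (* Delta_infty = lim Delta_t exists with all coordinates nonzero *)
  (forall j, (j < d)%nat -> exists Dinf : R,
     is_lim (fun t => Rabs (u j t ^ 2 - v j t ^ 2)) p_infty Dinf /\ Dinf <> 0) ->
  forall j, (j < d)%nat ->
    (exists G : R,
       is_lim (fun t => RInt (fun s => gradL n d X y (theta_of u v s) j) 0 t) p_infty G)
    /\
    is_lim (fun t => RInt (fun s => gradL n d X y (theta_of u v s) j * exp (- (t - s) / lam)) 0 t)
      p_infty 0.
Proof.
  intros Hn Hlam Hflow Hode _ _ [M HM] HDelta j Hj.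
  destruct (Loss_minimizer n d X y Hn) as [w Hw].
  destruct (grad_coord_exp_decay n d X y lam M u v du dv ddu ddv w Hn Hlam Hflow Hode HM Hw
              HDelta j Hj) as [K [mu [Hmu [Hmu_lam Hbound]]]].
  pose proof (fun s => grad_coord_continuous n d X y u v du dv ddu ddv Hflow j s Hj) as Hcont.
  split.
  - exact (is_lim_RInt_exp_decay _ K mu Hmu Hcont Hbound).
  - exact (is_lim_RInt_exp_kernel _ K mu Hmu Hcont Hbound lam Hlam Hmu_lam).
Qed.
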